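(* Let $T$ be a tree and let $T'\subseteq T$ be a nonempty subset which is open and connected. Then $\chi_T(T')=2-\mathrm{card}\,\partial_T T'$.
   Context: A tree $T$ is a finite connected graph without cycles, with vertex set $V$ and edge set $E$ (edges are $2$-element subsets of $V$), regarded as the set $V\sqcup E$. It carries the topology whose closed sets are the sub-graphs, i.e. subsets containing both endpoints of each edge they contain. $\overline{T'}$ denotes the closure and $\partial_T T':=\overline{T'}\setminus T'$ the boundary. For a vertex $v$, $\mathrm{val}(v)$ is the number of edges containing $v$, $\chi_T(v):=2-\mathrm{val}(v)$, and for a subset $T'$, $\chi_T(T'):=\sum_{v\in V\cap T'}\chi_T(v)$. *)

From mathcomp Require Import all_boot all_order all_algebra.
Set Implicit Arguments. Unset Strict Implicit. Unset Printing Implicit Defensive.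
Import GRing.Theory Num.Theory.

Section Tree.
Variables (V : finType) (E : {set {set V}}).

Definition is_graph : Prop := forall e, e \in E -> #|e| = 2.

Definition adj : rel V := fun x y => [set x; y] \in E.

Definition is_tree : Prop :=
  is_graph /\ (forall x y : V, connect adj x y) /\
  (forall c : seq V, 3 <= size c -> ~~ (cycle adj c && uniq c)).

(* The space T = V ⊔ E, represented inside V + {set V}. *)
Definition pt := (V + {set V})%type.
Definition points : {set pt} :=
  [set x : pt | match x with inl _ => true | inr e => e \in E end].

(* closed sets = sub-graphs *)
Definition closedb (S : {set pt}) : bool :=
  (S \subset points) &&
  [forall e : {set V}, (inr e \in S) ==> [forall v in e, inl v \in S]].

Definition openb (S : {set pt}) : bool :=
  (S \subset points) && closedb (points :\: S).

Definition closure (S : {set pt}) : {set pt} :=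
  \bigcap_(C | closedb C && (S \subset C)) C.

Definition boundary (S : {set pt}) : {set pt} := closure S :\: S.

Definition connectedb (S : {set pt}) : Prop :=
  forall U1 U2 : {set pt}, openb U1 -> openb U2 ->
    S \subset U1 :|: U2 -> S :&: U1 :&: U2 = set0 ->
    S :&: U1 = set0 \/ S :&: U2 = set0.

Definition valence (v : V) : nat := #|[set e in E | v \in e]|.
Definition chi_v (v : V) : int := 2%:Z - (valence v)%:Z.
Definition chi (S : {set pt}) : int := \sum_(v : V | inl v \in S) chi_v v.

End Tree.

From Pilot Require Import Defs.
From mathcomp Require Import all_boot all_order all_algebra.
From mathcomp Require Import zify.
Import GRing.Theory Num.Theory.
Set Implicit Arguments. Unset Strict Implicit. Unset Printing Implicit Defensive.

(* Grow T' one point at a time, keeping it connected for the incidence relation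
   between vertices and edges, and follow the quantity
     chi(A) + #(frontier of A) + #{(v, e) | v in A, v in e, e not in A},
   the frontier being the set of vertices outside A that lie on an edge of A.
   It equals 2 for a single point, and it is preserved at each step because T is
   a tree: a new vertex lies on exactly one edge of A (two would close a cycle
   through it), and a new edge uw with u in A has its far end w outside A and
   outside the frontier. For open A the last term vanishes, and the closure of A
   is A together with its frontier. *)

Lemma path_exit (T : Type) (r : rel T) (A : pred T) x s :
  path r x s -> A x -> ~~ A (last x s) -> exists y z, [/\ A y, ~~ A z & r y z].
Proof.
elim: s x => [|y s IH] x /=; first by move=> _ ->.
move=> /andP[rxy ps] Ax; have [Ay|nAy] := boolP (A y); first exact: IH.
by exists x, y.
Qed.

Lemma path_all_target (T : Type) (r : rel T) (P : pred T) x s :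
  (forall u w, r u w -> P w) -> path r x s -> all P s.
Proof.
move=> rP; elim: s x => [|y s IH] x //= /andP[rxy ps].
by rewrite (rP _ _ rxy) (IH _ ps).
Qed.

Section Incidence.
Variables (V : finType) (E : {set {set V}}).

Definition incident (p q : pt V) : bool :=
  match p, q with
  | inl v, inr e | inr e, inl v => (e \in E) && (v \in e)
  | _, _ => false
  end.

Definition incident_in (A : {set pt V}) : rel (pt V) :=
  fun p q => [&& p \in A, q \in A & incident p q].

Definition inc_connected (A : {set pt V}) : Prop :=
  {in A &, forall p q, connect (incident_in A) p q}.

Lemma incidentC p q : incident p q = incident q p.
Proof. by case: p; case: q. Qed.

Lemma incident_inC A p q : incident_in A p q = incident_in A q p.
Proof. by rewrite /incident_in incidentC andbCA. Qed.

Lemma in_points_edge (e : {set V}) : ((inr e : pt V) \in points E) = (e \in E).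
Proof. by rewrite inE. Qed.

Lemma inc_connected_set1 p : inc_connected [set p].
Proof. by move=> a b /set1P-> /set1P->; exact: connect0. Qed.

Lemma inc_connected_setU1 (A : {set pt V}) p q :
  inc_connected A -> q \in A -> incident q p -> inc_connected (p |: A).
Proof.
move=> cA qA qp.
have widen a b : connect (incident_in A) a b -> connect (incident_in (p |: A)) a b.
  apply: connect_sub => c d /and3P[cA' dA' cd]; apply: connect1.
  by rewrite /incident_in !inE cA' dA' cd !orbT.
have pq : incident_in (p |: A) p q by rewrite /incident_in !inE eqxx qA orbT incidentC.
have qp' : incident_in (p |: A) q p by rewrite incident_inC.
move=> a b /setU1P[->|aA] /setU1P[->|bA].
- exact: connect0.
- exact: connect_trans (connect1 pq) (widen _ _ (cA _ _ qA bA)).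
- exact: connect_trans (widen _ _ (cA _ _ aA qA)) (connect1 qp').
- exact: widen _ _ (cA _ _ aA bA).
Qed.

Lemma inc_connected_exit (S A : {set pt V}) : inc_connected S ->
  A \subset S -> A != set0 -> A != S -> exists q p, [/\ q \in A, p \in S :\: A & incident q p].
Proof.
move=> cS sAS /set0Pn[x xA] AS.
have [y yS yA] : exists2 y, y \in S & y \notin A.
  by apply/subsetPn; apply: contra AS => sSA; rewrite eqEsubset sAS.
case/connectP: (cS _ _ (subsetP sAS _ xA) yS) => s xs yE.
have lA : last x s \notin A by rewrite -yE.
have [q [p [qA pA /and3P[_ pS qp]]]] := path_exit xs xA lA.
by exists q, p; rewrite inE pA pS.
Qed.

Lemma openb_incident (S : {set pt V}) v e :
  openb E S -> inl v \in S -> e \in E -> v \in e -> inr e \in S.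
Proof.
case/andP=> _ /andP[_ /forallP /(_ e) closedC] vS eE ve.
apply/negPn/negP=> eS.
have /(implyP closedC) /forallP /(_ v) : (inr e : pt V) \in points E :\: S.
  by rewrite !inE eS eE.
by rewrite ve inE vS.
Qed.

Lemma openb_incident_closed (U : {set pt V}) : U \subset points E ->
  (forall v e, e \in E -> v \in e -> inl v \in U -> inr e \in U) -> openb E U.
Proof.
move=> sU incU; rewrite /openb sU /closedb subsetDl /=.
apply/forallP=> e; apply/implyP; rewrite !inE => /andP[eU eE].
apply/forallP=> v; apply/implyP=> ve; rewrite !inE andbT.
by apply: contra eU; apply: incU.
Qed.

Lemma openb_connected_inc_connected (S : {set pt V}) :
  openb E S -> connectedb E S -> inc_connected S.
Proof.
move=> oS cS x y xS yS; have sS : S \subset points E by case/andP: oS.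
have symS : connect_sym (incident_in S).
  by apply: sym_connect_sym => p q; rewrite incident_inC.
(* the incidence component of x in S and its complement in S are both open *)
pose U1 := [set z in S | connect (incident_in S) x z].
have comp_edge v e : e \in E -> v \in e -> inl v \in S ->
    inr e \in S /\ connect (incident_in S) x (inl v) = connect (incident_in S) x (inr e).
  move=> eE ve vS; have eS := openb_incident oS vS eE ve; split=> //.
  by apply: (same_connect1r symS); rewrite /incident_in vS eS /= eE.
have oU1 : openb E U1.
  apply: openb_incident_closed => [|v e eE ve].
    by apply: subset_trans sS; apply/subsetP=> z; rewrite inE => /andP[].
  by rewrite !inE => /andP[/(comp_edge v e eE ve) [-> <-]].
have oU2 : openb E (S :\: U1).
  apply: openb_incident_closed => [|v e eE ve]; first exact: subset_trans (subsetDl _ _) sS.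
  rewrite !inE => /andP[nU1 vS]; have [-> <-] := comp_edge v e eE ve vS.
  by rewrite andbT; move: nU1; rewrite vS.
have cover : S \subset U1 :|: (S :\: U1).
  by apply/subsetP=> z zS; rewrite !inE zS; case: (connect _ _ _).
have disj : S :&: U1 :&: (S :\: U1) = set0.
  by apply/setP=> z; rewrite !inE; case: (z \in S); case: (connect _ _ _).
case: (cS _ _ oU1 oU2 cover disj) => [/setP/(_ x)|/setP/(_ y)].
  by rewrite !inE xS connect0.
by rewrite !inE yS /=; case: (connect _ _ _).
Qed.


Definition frontier (A : {set pt V}) : {set V} :=
  [set b | (inl b \notin A) && [exists e, (inr e \in A) && (b \in e)]].

Lemma closure_frontier (S : {set pt V}) : S \subset points E ->
  Defs.closure E S = S :|: [set inl b | b in frontier S].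
Proof.
move=> sS; apply/setP=> z; apply/bigcapP/idP.
- apply; rewrite subsetUl andbT; apply/andP; split.
    apply/subsetP=> w; rewrite inE => /orP[/(subsetP sS)//|/imsetP[b _ ->]].
    by rewrite inE.
  apply/forallP=> e; apply/implyP; rewrite inE => /orP[eS|/imsetP[b _ //]].
  apply/forallP=> v; apply/implyP=> ve; rewrite inE.
  have [//|vS] := boolP (inl v \in S).
  apply/orP; right; apply/imsetP; exists v => //.
  by rewrite inE vS /=; apply/existsP; exists e; rewrite eS ve.
- rewrite inE => /orP[zS C /andP[_ /subsetP]|/imsetP[b]]; first exact.
  rewrite inE => /andP[_ /existsP[e /andP[eS be]]] -> C /andP[/andP[_ cC] sC].
  by move: cC => /forallP /(_ e); rewrite (subsetP sC _ eS) => /forallP /(_ b); rewrite be.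
Qed.

Lemma card_boundary (S : {set pt V}) : S \subset points E ->
  #|boundary E S| = #|frontier S|.
Proof.
move=> sS; rewrite /boundary closure_frontier // setDUl setDv set0U.
have -> : [set (inl b : pt V) | b in frontier S] :\: S = [set inl b | b in frontier S].
  apply/setP=> z; rewrite !inE; apply/andb_idl => /imsetP[b]; rewrite inE.
  by case/andP=> bS _ ->.
by apply: card_imset => a b [].
Qed.

Definition out_edges (A : {set pt V}) (v : V) : {set {set V}} :=
  [set e in E | (v \in e) && (inr e \notin A)].

Definition n_out_edges (A : {set pt V}) : nat :=
  \sum_(v | inl v \in A) #|out_edges A v|.

Definition euler_relation (A : {set pt V}) : Prop :=
  (chi E A + (#|frontier A|)%:Z + (n_out_edges A)%:Z = 2)%R.

Lemma n_out_edges_open (S : {set pt V}) : openb E S -> n_out_edges S = 0.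
Proof.
move=> oS; apply: big1 => v vS; apply/eqP; rewrite cards_eq0; apply/eqP/setP => f.
rewrite !inE; apply/negbTE/negP => /and3P[fE vf].
by rewrite (openb_incident oS vS fE vf).
Qed.

Lemma chi_setU1_vertex (A : {set pt V}) v :
  inl v \notin A -> chi E (inl v |: A) = (chi_v E v + chi E A)%R.
Proof.
move=> vA; rewrite /chi (bigD1 v) ?setU11 //=; congr (_ + _)%R.
apply: eq_bigl => u; rewrite !inE (inj_eq inl_inj).
by case: eqVneq => [->|]; rewrite ?(negbTE vA) ?andbT.
Qed.

Lemma chi_setU1_edge (A : {set pt V}) e : chi E (inr e |: A) = chi E A.
Proof. by apply: eq_bigl => v; rewrite !inE. Qed.

Lemma frontier_setU1_vertex (A : {set pt V}) v :
  frontier (inl v |: A) = frontier A :\ v.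
Proof.
apply/setP=> b; rewrite !inE negb_or -andbA; congr (_ && (_ && _)).
by apply: eq_existsb => f; rewrite !inE.
Qed.

Lemma frontier_setU1_edge (A : {set pt V}) u w :
  inl u \in A -> inl w \notin A -> frontier (inr [set u; w] |: A) = w |: frontier A.
Proof.
move=> uA wA; apply/setP=> b; rewrite !inE /=.
have [->|bw] /= := eqVneq b w.
  by rewrite wA; apply/existsP; exists [set u; w]; rewrite !inE !eqxx orbT.
have [bA|bA] //= := boolP (inl b \in A).
apply/existsP/existsP => -[f /andP[fA bf]]; last by exists f; rewrite inE fA orbT.
move: fA => /setU1P[[fe]|fA]; last by exists f; rewrite fA.
by move: bf; rewrite fe !inE (negbTE bw) orbF => /eqP bu; rewrite bu uA in bA.
Qed.

Lemma out_edges_setU1_vertex (A : {set pt V}) v u :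
  out_edges (inl v |: A) u = out_edges A u.
Proof. by apply/setP=> f; rewrite !inE. Qed.

Lemma n_out_edges_setU1_vertex (A : {set pt V}) v : inl v \notin A ->
  n_out_edges (inl v |: A) = n_out_edges A + #|out_edges A v|.
Proof.
move=> vA; rewrite /n_out_edges (bigD1 v) ?setU11 //= addnC out_edges_setU1_vertex.
congr (_ + _); apply: eq_big => u; last by rewrite out_edges_setU1_vertex.
by rewrite !inE (inj_eq inl_inj); case: eqVneq => [->|]; rewrite ?(negbTE vA) ?andbT.
Qed.

Lemma n_out_edges_setU1_edge (A : {set pt V}) u w :
  [set u; w] \in E -> inr [set u; w] \notin A -> inl u \in A -> inl w \notin A ->
  (n_out_edges (inr [set u; w] |: A)).+1 = n_out_edges A.
Proof.
move=> eE eA uA wA; set e := [set u; w].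
have out_u : out_edges (inr e |: A) u = out_edges A u :\ e.
  by apply/setP=> f; rewrite !inE (inj_eq inr_inj); case: eqVneq; rewrite /= ?andbF ?andbT.
have out_x x : inl x \in A -> x != u -> out_edges (inr e |: A) x = out_edges A x.
  move=> xA xu; apply/setP=> f; rewrite !inE (inj_eq inr_inj).
  case: (eqVneq f e) => [->|//] /=; rewrite !inE (negbTE xu) /=.
  by case: (eqVneq x w) => [xw|]; rewrite ?andbF // -xw xA in wA.
have e_out : e \in out_edges A u by rewrite !inE eE eqxx eA.
have -> : n_out_edges (inr e |: A) = \sum_(x | inl x \in A) #|out_edges (inr e |: A) x|.
  by apply: eq_bigl => x; rewrite !inE.
rewrite /n_out_edges (bigD1 u uA) [RHS](bigD1 u uA) /= out_u [in RHS](cardsD1 e) e_out.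
rewrite add1n addSn; congr (_ + _).+1.
by apply: eq_bigr => x /andP[xA xu]; rewrite out_x.
Qed.

Lemma valence_out_edges (A : {set pt V}) v e0 :
  e0 \in E -> inr e0 \in A -> v \in e0 -> (forall f, inr f \in A -> v \in f -> f = e0) ->
  valence E v = (#|out_edges A v|).+1.
Proof.
move=> e0E e0A ve0 uniq_e0; rewrite /valence.
have -> : [set e in E | v \in e] = e0 |: out_edges A v.
  apply/setP=> f; rewrite !inE; have [fA|fA] /= := boolP (inr f \in A).
    rewrite !andbF orbF; apply/idP/eqP => [/andP[_ vf]|->]; first exact: uniq_e0.
    by rewrite e0E ve0.
  by rewrite !andbT; case: (eqVneq f e0) => [fe0|//]; rewrite fe0 e0A in fA.
by rewrite cardsU1 !inE e0A /= !andbF.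
Qed.

End Incidence.

Section Tree.
Variables (V : finType) (E : {set {set V}}).
Hypothesis tree : is_tree E.

Lemma card_edge e : e \in E -> #|e| = 2.
Proof. by case: tree => graphE _; apply: graphE. Qed.

Lemma edge_eq e x y : e \in E -> x \in e -> y \in e -> x != y -> e = [set x; y].
Proof.
move=> eE xe ye xy; apply/eqP; rewrite eq_sym eqEcard cards2 xy card_edge // andbT.
by apply/subsetP=> z; rewrite !inE => /orP[]/eqP->.
Qed.

Lemma edge_other e u : e \in E -> u \in e -> exists2 w, w != u & e = [set u; w].
Proof.
move=> eE; have /cards2P [x [y [xy ->]]] : #|e| == 2 by rewrite card_edge.
rewrite !inE => /orP[]/eqP->; first by exists y; rewrite // eq_sym.
by exists x; rewrite // setUC.
Qed.

Lemma adj_neq x y : adj E x y -> x != y.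
Proof. by move/card_edge; rewrite cards2; case: eqP. Qed.

Lemma adjC x y : adj E x y = adj E y x.
Proof. by rewrite /adj setUC. Qed.

Lemma uniq_cycle_size c : cycle (adj E) c -> uniq c -> size c < 3.
Proof.
case: tree => _ [_ acyclic] cyc uc; rewrite ltnNge; apply/negP => c3.
by move: (acyclic c c3); rewrite cyc uc.
Qed.

Lemma no_detour_vertex (r : rel V) b x y :
  subrel r [rel u w | adj E u w && (w != b)] ->
  x != y -> adj E b x -> adj E b y -> ~~ connect r x y.
Proof.
move=> rsub xy bx by'; apply/negP => /connectP [p rp yE]; move: xy by'; rewrite yE.
case: (shortenP rp) => p' rp' up' _ xy by'.
have adjp : path (adj E) x p' by apply: sub_path rp' => u w /rsub /andP[].
have nb : b \notin p'.
  by rewrite -has_pred1 -all_predC; apply: path_all_target rp' => u w /rsub /andP[].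
have : size [:: b, x & p'] < 3.
  apply: uniq_cycle_size; first by rewrite /= rcons_path bx adjp adjC by'.
  by rewrite cons_uniq up' andbT inE negb_or (adj_neq bx).
by case: p' {rp' up' adjp nb by'} xy => [|]; rewrite //= eqxx.
Qed.

Lemma no_detour_edge (r : rel V) u w :
  subrel r (adj E) -> ~~ r u w -> adj E u w -> ~~ connect r u w.
Proof.
move=> rsub nruw uw; apply/negP => /connectP [p rp wE]; move: nruw uw; rewrite wE.
case: (shortenP rp) => p' rp' up' _ nruw uw.
have adjp : path (adj E) u p' by apply: sub_path rp'.
have : size (u :: p') < 3.
  by apply: uniq_cycle_size => //; rewrite /= rcons_path adjp adjC uw.
case: p' {up' adjp} rp' nruw uw => [|z [|? ?]] //=.
  by move=> _ _ /adj_neq; rewrite eqxx.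
by rewrite andbT => ->.
Qed.

Definition touches (p : pt V) (x : V) : bool :=
  match p with inl v => x == v | inr e => x \in e end.

Definition adj_in (A : {set pt V}) : rel V :=
  fun x y => [&& inl x \in A, inl y \in A & inr [set x; y] \in A].

Section ConnectedSubset.
Variable A : {set pt V}.
Hypotheses (sA : A \subset points E) (cA : inc_connected E A).

Lemma edge_of_in e : inr e \in A -> e \in E.
Proof. by move/(subsetP sA); rewrite in_points_edge. Qed.

Lemma connect_adj_in_edge e x y : inr e \in A ->
  x \in e -> inl x \in A -> y \in e -> inl y \in A -> connect (adj_in A) x y.
Proof.
move=> eA xe xA ye yA; have [->|xy] := eqVneq x y; first exact: connect0.
by apply: connect1; rewrite /adj_in xA yA -(edge_eq (edge_of_in eA) xe ye xy).
Qed.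

Lemma connect_adj_in_path p s x y : path (incident_in E A) p s -> p \in A ->
  touches p x -> inl x \in A -> touches (last p s) y -> inl y \in A ->
  connect (adj_in A) x y.
Proof.
elim: s p x => [|q s IH] p x /=.
  case: p => [v|e] _ pA /=; first by move=> /eqP-> _ /eqP->; rewrite connect0.
  exact: connect_adj_in_edge.
case/andP=> /and3P[_ qA pq] ps pA px xA qy yA.
case: p pA px xA pq => [v|e] pA px xA; case: q qA ps qy => [z|f] qA ps qy //= /andP[_ zp].
  by move/eqP: px => ->; exact: IH ps qA zp pA qy yA.
apply: connect_trans (IH _ _ ps qA (eqxx z) qA qy yA).
exact: connect_adj_in_edge pA px xA zp qA.
Qed.

Lemma connect_adj_in p q x y : p \in A -> q \in A ->
  touches p x -> inl x \in A -> touches q y -> inl y \in A -> connect (adj_in A) x y.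
Proof.
move=> pA qA px xA qy yA; case/connectP: (cA pA qA) => s ps qE.
by apply: (connect_adj_in_path ps) => //; rewrite -qE.
Qed.

Lemma touches_in p q : p \in A -> q \in A -> p != q -> exists2 x, touches p x & inl x \in A.
Proof.
case: p => [v|e] pA qA pq; first by exists v; rewrite /= ?eqxx.
case/connectP: (cA pA qA) => [[|z s]] /=; first by move=> _ qE; rewrite qE eqxx in pq.
by case/andP => /and3P[_ zA]; case: z zA => [x|f] zA //= /andP[_ xe] _ _; exists x.
Qed.

Lemma adj_in_adj : subrel (adj_in A) (adj E).
Proof. by move=> u w /and3P[_ _ /edge_of_in]. Qed.

Lemma adj_in_avoid b : inl b \notin A -> subrel (adj_in A) [rel u w | adj E u w && (w != b)].
Proof.
move=> bA u w uw; rewrite /= adj_in_adj //; case/and3P: uw => _ wA _.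
by apply: contraNneq bA => <-.
Qed.

Lemma edge_in_unique v e0 e1 : inl v \notin A -> inr e0 \in A -> inr e1 \in A ->
  v \in e0 -> v \in e1 -> e1 = e0.
Proof.
move=> vA e0A e1A ve0 ve1; apply/eqP; apply: contraT => e10.
have [a0 a0e0 a0A] : exists2 a0, a0 \in e0 & inl a0 \in A.
  by apply: touches_in e0A e1A _; rewrite (inj_eq inr_inj) eq_sym.
have [a1 a1e1 a1A] : exists2 a1, a1 \in e1 & inl a1 \in A.
  by apply: touches_in e1A e0A _; rewrite (inj_eq inr_inj).
have v_neq a : inl a \in A -> v != a by move=> aA; apply: contraNneq vA => ->.
have e0E := edge_eq (edge_of_in e0A) ve0 a0e0 (v_neq _ a0A).
have e1E := edge_eq (edge_of_in e1A) ve1 a1e1 (v_neq _ a1A).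
have a01 : a0 != a1 by apply: contraNneq e10 => a01; rewrite e0E e1E a01.
have va0 : adj E v a0 by rewrite /adj -e0E (edge_of_in e0A).
have va1 : adj E v a1 by rewrite /adj -e1E (edge_of_in e1A).
(* a0 and a1 are neighbours of v joined inside A, hence avoiding v *)
move: (no_detour_vertex (adj_in_avoid vA) a01 va0 va1).
by rewrite (connect_adj_in e0A e1A a0e0 a0A a1e1 a1A).
Qed.

Lemma far_end_notin u w :
  inr [set u; w] \notin A -> [set u; w] \in E -> inl u \in A -> inl w \notin A.
Proof.
move=> eA eE uA; apply/negP => wA.
have nuw : ~~ adj_in A u w by rewrite /adj_in (negbTE eA) !andbF.
move: (no_detour_edge adj_in_adj nuw eE).
by rewrite (connect_adj_in uA wA (eqxx u) uA (eqxx w) wA).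
Qed.

End ConnectedSubset.

Lemma euler_relation_vertex v : euler_relation E [set inl v].
Proof.
have in_v u : (inl u \in [set (inl v : pt V)]) = (u == v) by rewrite !inE (inj_eq inl_inj).
rewrite /euler_relation /chi /n_out_edges !(eq_bigl _ _ in_v) !big_pred1_eq.
have -> : frontier [set inl v] = set0.
  by apply/setP=> b; rewrite !inE; apply/negbTE/negP => /andP[_ /existsP[e]]; rewrite inE.
have -> : out_edges E [set inl v] v = [set e in E | v \in e].
  by apply/setP=> e; rewrite !inE andbT.
by rewrite cards0 /chi_v /valence; lia.
Qed.

Lemma euler_relation_edge e : e \in E -> euler_relation E [set inr e].
Proof.
move=> eE; rewrite /euler_relation /chi /n_out_edges !big_pred0 => [|u|u]; rewrite ?inE //.
have -> : frontier [set inr e] = e.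
  apply/setP=> b; rewrite !inE /=; apply/existsP/idP => [[f]|be].
    by rewrite inE (inj_eq inr_inj) => /andP[/eqP->].
  by exists e; rewrite !inE eqxx.
by rewrite card_edge.
Qed.

Lemma euler_relation_setU1_vertex (A : {set pt V}) v e :
  A \subset points E -> inc_connected E A -> euler_relation E A ->
  inl v \notin A -> inr e \in A -> v \in e -> euler_relation E (inl v |: A).
Proof.
move=> sA cA eulA vA eA ve.
have val_v : valence E v = #|out_edges E A v|.+1.
  apply: (valence_out_edges (edge_of_in sA eA) eA ve) => f fA vf.
  exact: (edge_in_unique sA cA vA eA fA ve vf).
have vF : v \in frontier A by rewrite inE vA; apply/existsP; exists e; rewrite eA.
move: eulA; rewrite /euler_relation chi_setU1_vertex // frontier_setU1_vertex.
by rewrite n_out_edges_setU1_vertex // /chi_v val_v (cardsD1 v) vF; lia.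
Qed.

Lemma euler_relation_setU1_edge (A : {set pt V}) u e :
  A \subset points E -> inc_connected E A -> euler_relation E A ->
  inr e \notin A -> e \in E -> inl u \in A -> u \in e -> euler_relation E (inr e |: A).
Proof.
move=> sA cA eulA eA eE uA ue; have [w _ euw] := edge_other eE ue; subst e.
have wA := far_end_notin sA cA eA eE uA.
have wF : w \notin frontier A.
  rewrite inE wA /=; apply/existsP => -[f /andP[fA wf]].
  have sA' : inr [set u; w] |: A \subset points E by rewrite subUset sub1set inE eE.
  have cA' : inc_connected E (inr [set u; w] |: A).
    by apply: inc_connected_setU1 cA uA _; rewrite /= eE !inE eqxx.
  have wA' : inl w \notin inr [set u; w] |: A by rewrite !inE.
  have we : w \in [set u; w] by rewrite !inE eqxx orbT.
  have fe := edge_in_unique sA' cA' wA' (setU11 _ _) (setU1r _ fA) we wf.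
  by rewrite -fe fA in eA.
move: eulA; rewrite /euler_relation chi_setU1_edge frontier_setU1_edge // cardsU1 wF add1n.
by rewrite -(n_out_edges_setU1_edge eE eA uA wA); move: (n_out_edges _ _) => n; lia.
Qed.

Lemma euler_relation_set1 p : p \in points E -> euler_relation E [set p].
Proof.
case: p => [v|e] pE; first exact: euler_relation_vertex.
by apply: euler_relation_edge; rewrite -in_points_edge.
Qed.

Lemma euler_relation_setU1 (A : {set pt V}) q p :
  A \subset points E -> inc_connected E A -> euler_relation E A ->
  q \in A -> p \notin A -> incident E q p -> euler_relation E (p |: A).
Proof.
move=> sA cA eulA; case: q => [u|e] qA; case: p => [v|f] pA //= /andP[eE ve].
  exact: euler_relation_setU1_edge eulA pA eE qA ve.
exact: euler_relation_setU1_vertex eulA pA qA ve.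
Qed.

Lemma euler_relation_inc_connected (S : {set pt V}) :
  S \subset points E -> inc_connected E S -> S != set0 -> euler_relation E S.
Proof.
move=> sS cS /set0Pn[x0 x0S].
have grow k : 0 < k <= #|S| ->
    exists2 A : {set pt V}, A \subset S & [/\ #|A| = k, inc_connected E A & euler_relation E A].
  elim: k => [//|[|k] IH] /andP[_ kS].
    exists [set x0]; rewrite ?sub1set ?cards1 //; split=> //; first exact: inc_connected_set1.
    exact/euler_relation_set1/(subsetP sS).
  have [A AS [cardA cA eulA]] := IH (ltnW kS).
  have A0 : A != set0 by rewrite -card_gt0 cardA.
  have AS' : A != S by apply: contraTneq kS => <-; rewrite cardA ltnn.
  have [q [p [qA /setDP[pS pA] qp]]] := inc_connected_exit cS AS A0 AS'.
  exists (p |: A); first by rewrite subUset sub1set pS.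
  split; first by rewrite cardsU1 pA cardA.
    exact: inc_connected_setU1 cA qA qp.
  exact: euler_relation_setU1 (subset_trans AS sS) cA eulA qA pA qp.
have [|A AS [cardA _ eulA]] := grow #|S|.
  by rewrite leqnn andbT card_gt0; apply/set0Pn; exists x0.
have -> : S = A by apply/eqP; rewrite eq_sym eqEcard AS cardA leqnn.
exact: eulA.
Qed.

End Tree.

Unset Implicit Arguments.
Local Open Scope ring_scope.

Theorem lemma2p8 (V : finType) (E : {set {set V}}) (T' : {set pt V}) :
  is_tree E -> T' \subset points E -> T' != set0 ->
  openb E T' -> connectedb E T' ->
  chi E T' = 2%:Z - (#|boundary E T'|)%:Z.
Proof.
move=> tree sT nT oT cT.
have := euler_relation_inc_connected tree sT (openb_connected_inc_connected oT cT) nT.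
rewrite /euler_relation n_out_edges_open // card_boundary //; lia.
Qed.
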